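(* Let $n$ and $m$ be integers with $n\ge 1$ and $0\le m\le n$, and let $\theta>0$ be real. Then $$S'_{n+1,m+1}(\theta)=\frac{\theta^{m}}{(\theta+1)_n}\,\frac{1}{2\pi i}\int_{\mathcal C_R}\frac{(z+1)_n}{z^{m}}\,\frac{dz}{z-\theta},$$ for every $R>\theta$, where $\mathcal C_R$ is the circle $|z|=R$ in the complex plane, traversed once counterclockwise.
   Context: For a complex number $\alpha$ and an integer $n\ge0$, the Pochhammer symbol is $(\alpha)_0=1$, $(\alpha)_n=\alpha(\alpha+1)\cdots(\alpha+n-1)$. The Stirling numbers of the first kind $S_n^{(k)}$ ($0\le k\le n$) are defined by the polynomial identity $(\theta)_n=\sum_{k=0}^n(-1)^{n-k}S_n^{(k)}\theta^k$. For integers $0\le m\le n$ and real $\theta>0$, define $$S'_{n,m}(\theta)=\frac{1}{(\theta)_n}\sum_{k=m}^n(-1)^{n-k}S_n^{(k)}\theta^k .$$ *)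

From Stdlib Require Import Reals.
From Coquelicot Require Import Coquelicot.
From mathcomp Require Import all_boot all_algebra.

Set Implicit Arguments.
Unset Strict Implicit.

Definition rising_poly (n : nat) : {poly int} :=
  (\prod_(i < n) ('X + ((i : nat)%:Z)%:P))%R.

(* Stirling numbers of the first kind, defined by
   (theta)_n = sum_k (-1)^(n-k) S_n^(k) theta^k,
   i.e. S_n^(k) = (-1)^(n-k) * [coefficient of X^k in (X)_n]. *)
Definition stirling1 (n k : nat) : int :=
  ((-1) ^+ (n - k) * (rising_poly n)`_k)%R.

Definition int_to_R (z : int) : R :=
  match z with
  | Posz k => INR k
  | Negz k => Ropp (INR (S k))
  end.

Fixpoint poch (a : R) (n : nat) : R :=
  match n with
  | O => R1
  | S k => Rmult (poch a k) (Rplus a (INR k))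
  end.

Fixpoint cpoch (z : C) (n : nat) : C :=
  match n with
  | O => RtoC 1
  | S k => Cmult (cpoch z k) (Cplus z (RtoC (INR k)))
  end.

Fixpoint cpow (z : C) (n : nat) : C :=
  match n with
  | O => RtoC 1
  | S k => Cmult z (cpow z k)
  end.

Definition S' (n m : nat) (theta : R) : R :=
  Rmult (Rinv (poch theta n))
   (sum_f_R0 (fun k => if Nat.leb m k
                       then Rmult (Rmult (pow (Ropp R1) (n - k)) (int_to_R (stirling1 n k)))
                                  (pow theta k)
                       else R0) n).

Definition circle_integral (f : C -> C) (r : R) : C :=
  RInt (V := C_R_CompleteNormedModule)
    (fun t : R => Cmult (f (Cmult (RtoC r) (cos t, sin t)))
                        (Cmult (Cmult Ci (RtoC r)) (cos t, sin t)))
    R0 (Rmult 2 PI).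

(* Put z = r e^{it} and J_k = \oint_{|z|=r} z^k dz / (z - theta) for integers k.
   The identity z^k / (z - theta) = z^(k-1) + theta z^(k-1) / (z - theta) gives
   J_k = 2 pi i [k = 0] + theta J_(k-1).  For k < 0 it yields J_k = theta^N J_(k-N)
   for every N, while |J_(k-N)| = O(r^-N); as |theta| < r, J_k = 0, and then
   J_k = 2 pi i theta^k for k >= 0.  Writing (z + 1)_n = sum_j a_(n+1,j+1) z^j, where
   a_(N,k) = (-1)^(N-k) S_N^(k) is the coefficient of X^k in (X)_N, the contour
   integral is 2 pi i sum_(j >= m) a_(n+1,j+1) theta^(j-m); this is the sum defining
   S'_(n+1,m+1)(theta) after the shift k = j + 1, since (theta)_(n+1) = theta (theta+1)_n. *)

From Stdlib Require Import Reals Lra Lia ZArith.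
From Coquelicot Require Import Coquelicot.
From Corelib Require Import ssreflect.

(* MathComp is imported only inside this module, so that its notations do not
   shadow those of the Stdlib reals in the rest of the file. *)
Module RisingCoef.
From mathcomp Require Import all_boot all_algebra ssrZ.
Import GRing.Theory.
Local Open Scope ring_scope.

Lemma int_to_R_IZR (z : int) : int_to_R z = IZR (Z_of_int z).
Proof.
case: z => k; rewrite /int_to_R /Z_of_int INR_IZR_INZ //.
rewrite -opp_IZR; congr IZR; lia.
Qed.

Lemma int_to_R_M (a b : int) : int_to_R (a * b) = Rmult (int_to_R a) (int_to_R b).
Proof. by rewrite !int_to_R_IZR rmorphM mult_IZR. Qed.

Lemma int_to_R_sign p : int_to_R ((-1) ^+ p) = pow (Ropp R1) p.
Proof. by elim: p => [|p IH] //; rewrite exprS int_to_R_M IH. Qed.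

Definition rising_coef (N k : nat) : R := int_to_R (rising_poly N)`_k.

Local Open Scope R_scope.

Lemma rising_coef0 k : rising_coef 0 k = if k is 0 then 1 else 0.
Proof. by rewrite /rising_coef /rising_poly big_ord0 coef1; case: k. Qed.

Lemma rising_coefS N k :
  rising_coef N.+1 k = (if k is k'.+1 then rising_coef N k' else 0) + rising_coef N k * INR N.
Proof.
rewrite /rising_coef /rising_poly big_ord_recr /= -/(rising_poly N).
rewrite mulrDr coefD coefMX coefMC !int_to_R_IZR rmorphD rmorphM /= plus_IZR mult_IZR.
by case: k => [|k]; rewrite /= ?int_to_R_IZR -INR_IZR_INZ.
Qed.

Lemma stirling1_sign n k : (-1) ^ (n - k) * int_to_R (stirling1 n k) = rising_coef n k.
Proof.
by rewrite /stirling1 -int_to_R_sign -int_to_R_M mulrA -signr_odd -expr2 sqrr_sign mul1r.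
Qed.
End RisingCoef.

Import RisingCoef.
Open Scope R_scope.

Lemma rising_coef_gt N k : (N < k)%nat -> rising_coef N k = 0.
Proof.
elim: N k => [|N IH] [|k] lt_Nk; try lia.
- by rewrite rising_coef0.
- by rewrite rising_coefS !IH; try lia; ring.
Qed.

Lemma rising_coefS0 N : rising_coef (S N) 0 = 0.
Proof.
elim: N => [|N IH]; rewrite rising_coefS /=.
- rewrite rising_coef0; ring.
- rewrite IH; ring.
Qed.

(* Coquelicot's [sum_n] lemmas restated with the operations of [C] itself, so that
   rewriting leaves terms that [ring] and [field] recognise. *)
Lemma Csum_n_ext (f g : nat -> C) N :
  (forall k, (k <= N)%nat -> f k = g k) -> sum_n f N = sum_n g N.
Proof. exact: sum_n_ext_loc. Qed.

Lemma Csum_n_mult_l (c : C) (f : nat -> C) N :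
  sum_n (fun k => c * f k)%C N = (c * sum_n f N)%C.
Proof. exact: sum_n_mult_l. Qed.

Lemma Csum_n_mult_r (c : C) (f : nat -> C) N :
  sum_n (fun k => f k * c)%C N = (sum_n f N * c)%C.
Proof. exact: sum_n_mult_r. Qed.

Lemma Csum_n_plus (f g : nat -> C) N :
  sum_n (fun k => f k + g k)%C N = (sum_n f N + sum_n g N)%C.
Proof. exact: sum_n_plus. Qed.

Lemma Csum_n_Sn (f : nat -> C) N : sum_n f (S N) = (sum_n f N + f (S N))%C.
Proof. exact: sum_Sn. Qed.

Lemma Csum_n_shift (f : nat -> C) N :
  sum_n f (S N) = (f O + sum_n (fun k => f (S k)) N)%C.
Proof. by rewrite /sum_n sum_Sn_m; [rewrite sum_n_m_S | lia]. Qed.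

Lemma cpochS (w : C) n : cpoch w (S n) = (cpoch w n * (w + INR n))%C.
Proof. by []. Qed.

Lemma cpoch_expand (w : C) N :
  cpoch w N = sum_n (fun k => RtoC (rising_coef N k) * cpow w k)%C N :> C.
Proof.
elim: N => [|N IH].
  by rewrite sum_O rising_coef0 /=; ring.
have split_coef k : (RtoC (rising_coef (S N) k) * cpow w k =
    RtoC (if k is S k' then rising_coef N k' else 0) * cpow w k
    + RtoC (INR N) * (RtoC (rising_coef N k) * cpow w k))%C.
  by rewrite rising_coefS RtoC_plus RtoC_mult; ring.
rewrite (sum_n_ext _ _ _ split_coef) Csum_n_plus Csum_n_shift Csum_n_mult_l Csum_n_Sn.
rewrite rising_coef_gt; last lia.
rewrite cpochS IH.
have -> : sum_n (fun k => RtoC (rising_coef N k) * (w * cpow w k))%C N =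
    (sum_n (fun k => RtoC (rising_coef N k) * cpow w k)%C N * w)%C.
  by rewrite -Csum_n_mult_r; apply: Csum_n_ext => k _; ring.
ring.
Qed.

Lemma cpoch_succ_shift (w : C) n : cpoch w (S n) = (w * cpoch (w + 1) n)%C.
Proof.
elim: n => [|n IH]; first by rewrite /=; ring.
by rewrite cpochS IH cpochS S_INR RtoC_plus; ring.
Qed.

Lemma cpoch_shift_expand (z : C) n : z <> 0%C ->
  cpoch (z + 1) n = sum_n (fun k => RtoC (rising_coef (S n) (S k)) * cpow z k)%C n :> C.
Proof.
move=> z_neq0.
have scaled : (z * cpoch (z + 1) n =
    z * sum_n (fun k => RtoC (rising_coef (S n) (S k)) * cpow z k)%C n)%C.
  rewrite -cpoch_succ_shift cpoch_expand Csum_n_shift rising_coefS0 -Csum_n_mult_l.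
  by rewrite Cmult_0_l Cplus_0_l; apply: Csum_n_ext => k _ /=; ring.
transitivity (/ z * (z * cpoch (z + 1) n))%C; first by field.
by rewrite scaled; field.
Qed.

Lemma pochS a n : poch a (S n) = poch a n * (a + INR n).
Proof. by []. Qed.

Lemma poch_succ_shift a n : poch a (S n) = a * poch (a + 1) n.
Proof.
elim: n => [|n IH]; first by rewrite /=; ring.
by rewrite pochS IH pochS S_INR; ring.
Qed.

Lemma poch_gt0 a n : 0 < a -> 0 < poch a n.
Proof.
move=> a_gt0; elim: n => [|n IH] /=; first lra.
by apply: Rmult_lt_0_compat => //; have := pos_INR n; lra.
Qed.

Definition rising_tail_sum n m theta : R :=
  sum_f_R0 (fun j => rising_coef (S n) (S j) * (if Nat.leb m j then theta ^ (j - m) else 0)) n.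

Lemma S'_succ_succ n m theta : 0 < theta ->
  S' (n + 1) (m + 1) theta = theta ^ m / poch (theta + 1) n * rising_tail_sum n m theta.
Proof.
move=> theta_gt0; rewrite /S' /rising_tail_sum !Nat.add_1_r poch_succ_shift.
rewrite (sum_eq _ (fun k => if Nat.leb (S m) k then rising_coef (S n) k * theta ^ k else 0));
  last by move=> k _; case: (Nat.leb (S m) k); rewrite ?stirling1_sign.
rewrite decomp_sum /=; last lia.
rewrite Rplus_0_l -(sum_eq (fun j =>
    rising_coef (S n) (S j) * (if Nat.leb m j then theta ^ (j - m) else 0) * theta ^ S m));
  last first.
  move=> j _; case: (Nat.leb_spec m j) => [le_mj|_]; last by ring.
  by rewrite -(Nat.sub_add m j le_mj) pow_add Nat.add_sub /=; ring.
have poch_pos : 0 < poch (theta + 1) n by apply: poch_gt0; lra.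
by rewrite -scal_sum /=; field; lra.
Qed.

Lemma is_RInt_sum_n {V : NormedModule R_AbsRing} (f : nat -> R -> V) (If : nat -> V) a b N :
  (forall k, (k <= N)%nat -> is_RInt (f k) a b (If k)) ->
  is_RInt (fun t => sum_n (fun k => f k t) N) a b (sum_n If N).
Proof.
elim: N => [|N IH] If_k.
  by rewrite sum_O; apply: is_RInt_ext (If_k 0%nat (le_n 0)) => t _; rewrite sum_O.
rewrite sum_Sn; apply: is_RInt_ext (is_RInt_plus _ _ _ _ _ _ (IH _) (If_k _ (le_n _))).
- by move=> t _; rewrite sum_Sn.
- by move=> k le_kN; apply: If_k; lia.
Qed.

Lemma norm_C_R (x : C) : @norm R_AbsRing C_R_NormedModule x = Cmod x.
Proof.
have sq (a : R) : norm a * (norm a * 1) = a * (a * 1).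
  by rewrite /norm /= /abs /= Rmult_1_r -Rabs_mult Rabs_pos_eq; nra.
by rewrite /norm /= /prod_norm /Cmod /= !sq.
Qed.

Lemma le_0_of_le_geom x K q : Rabs q < 1 -> (forall N, x <= K * q ^ N) -> x <= 0.
Proof.
move=> q_lt1 le_x.
have := is_lim_seq_le _ _ x (K * 0) le_x (is_lim_seq_const x)
  (is_lim_seq_scal_l _ K 0 (is_lim_seq_geom q q_lt1)).
by rewrite Rmult_0_r.
Qed.

Definition circle_pow (r : R) (k : Z) (t : R) : C :=
  (powerRZ r k * cos (IZR k * t), powerRZ r k * sin (IZR k * t)).

Lemma circle_pow_add r j k t : r <> 0 ->
  circle_pow r (j + k) t = (circle_pow r j t * circle_pow r k t)%C.
Proof.
move=> r_neq0; rewrite /circle_pow /Cmult /= plus_IZR powerRZ_add //.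
by rewrite Rmult_plus_distr_r cos_plus sin_plus; f_equal; ring.
Qed.

Lemma circle_pow_1 r t : circle_pow r 1 t = (RtoC r * (cos t, sin t))%C.
Proof. by rewrite /circle_pow /Cmult /RtoC /= !Rmult_1_l; f_equal; ring. Qed.

Lemma Cmod_circle_pow r k t : 0 < r -> Cmod (circle_pow r k t) = powerRZ r k.
Proof.
move=> r_gt0; have rk_ge0 := powerRZ_le r k r_gt0.
rewrite /Cmod /circle_pow /= -[RHS](sqrt_pow2 _ rk_ge0); congr sqrt.
by have := sin2_cos2 (IZR k * t); rewrite /Rsqr; nra.
Qed.

Lemma circle_pow_neq0 r k t : 0 < r -> circle_pow r k t <> 0%C.
Proof.
move=> r_gt0 eq0; have := Cmod_circle_pow r k t r_gt0.
by rewrite eq0 Cmod_0; have := powerRZ_lt r k r_gt0; lra.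
Qed.

Lemma cpow_circle_pow r j t : r <> 0 ->
  cpow (circle_pow r 1 t) j = circle_pow r (Z.of_nat j) t.
Proof.
move=> r_neq0; elim: j => [|j IH] /=.
  by rewrite /circle_pow /RtoC /= Rmult_0_l cos_0 sin_0; f_equal; ring.
by rewrite IH -circle_pow_add // Zpos_P_of_succ_nat Z.add_1_l.
Qed.

Lemma sin_IZR_2PI k : sin (IZR k * (2 * PI)) = 0.
Proof. by apply: sin_eq_0_1; exists (2 * k)%Z; rewrite mult_IZR; ring. Qed.

Lemma cos_IZR_2PI k : cos (IZR k * (2 * PI)) = 1.
Proof.
rewrite (_ : IZR k * (2 * PI) = 2 * (IZR k * PI)); last by ring.
by rewrite cos_2a_sin sin_eq_0_1; [ring | exists k].
Qed.

Lemma is_RInt_derive_closed (F f : R -> R) a b :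
  (forall t, is_derive F t (f t)) -> (forall t, continuous f t) -> F b = F a ->
  is_RInt f a b 0.
Proof.
move=> dF cont_f FbFa; have := is_RInt_derive F f a b (fun t _ => dF t) (fun t _ => cont_f t).
by rewrite FbFa /minus plus_opp_r.
Qed.

Lemma is_RInt_Ci_circle_pow r k : r <> 0 ->
  is_RInt (V := C_R_NormedModule) (fun t => Ci * circle_pow r k t)%C 0 (2 * PI)
    (if (k =? 0)%Z then RtoC (2 * PI) * Ci else 0)%C.
Proof.
move=> r_neq0; case: Z.eqb_spec => [->|k_neq0].
  have := is_RInt_const 0 (2 * PI) (V := C_R_NormedModule) Ci.
  rewrite scal_R_Cmult Rminus_0_r; apply: is_RInt_ext => t _.
  by rewrite /circle_pow /Cmult /Ci /= !Rmult_0_l cos_0 sin_0; f_equal; ring.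
have kR_neq0 : IZR k <> 0 by apply: not_0_IZR.
apply: is_RInt_fct_extend_pair => /=.
- apply: (is_RInt_derive_closed (fun t => powerRZ r k * cos (IZR k * t) / IZR k)).
  + by move=> t; auto_derive; [|field].
  + by move=> t; apply: ex_derive_continuous; auto_derive.
  + by rewrite cos_IZR_2PI Rmult_0_r cos_0.
- apply: (is_RInt_derive_closed (fun t => powerRZ r k * sin (IZR k * t) / IZR k)).
  + by move=> t; auto_derive; [|field].
  + by move=> t; apply: ex_derive_continuous; auto_derive.
  + by rewrite sin_IZR_2PI !Rmult_0_r sin_0 Rmult_0_r.
Qed.

Section CauchyMoment.

Variables r theta : R.
Hypothesis theta_in : Rabs theta < r.

Let r_gt0 : 0 < r.
Proof. by have := Rabs_pos theta; lra. Qed.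

Definition cauchy_integrand (k : Z) (t : R) : C :=
  (circle_pow r k t * (Ci * circle_pow r 1 t) / (circle_pow r 1 t - theta))%C.

Lemma Cmod_circle_sub_ge t : r - Rabs theta <= Cmod (circle_pow r 1 t - theta).
Proof.
have := Cmod_triangle (circle_pow r 1 t - theta) theta.
rewrite (_ : (circle_pow r 1 t - theta + theta)%C = circle_pow r 1 t); last by ring.
by rewrite Cmod_circle_pow // Cmod_R /=; lra.
Qed.

Lemma circle_sub_neq0 t : (circle_pow r 1 t - theta)%C <> 0%C.
Proof.
move=> eq0; have := Cmod_circle_sub_ge t.
by rewrite eq0 Cmod_0; lra.
Qed.

Lemma circle_sub_sqr_gt0 t : 0 < (r * cos t - theta) ^ 2 + (r * sin t) ^ 2.
Proof.
have cos_le := COS_bound t; have := sin2_cos2 t; rewrite /Rsqr => pythagoras.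
have theta_cos_le : theta * cos t <= Rabs theta.
  by have := Rle_abs theta; have := Rle_abs (- theta); rewrite Rabs_Ropp; nra.
have := pow2_abs theta; nra.
Qed.

Lemma ex_RInt_cauchy_integrand k :
  ex_RInt (V := C_R_NormedModule) (cauchy_integrand k) 0 (2 * PI).
Proof.
apply: ex_RInt_fct_extend_pair; apply: ex_RInt_continuous => t _;
  apply: ex_derive_continuous;
  rewrite /cauchy_integrand /circle_pow /Cdiv /Cminus /Cmult /Cinv /Cplus /Copp /RtoC /Ci /=;
  auto_derive; rewrite !Rmult_1_l !Rmult_1_r Ropp_0 Rplus_0_r;
  have := circle_sub_sqr_gt0 t; repeat split; nra.
Qed.

Definition cauchy_moment (k : Z) : C :=
  RInt (V := C_R_CompleteNormedModule) (cauchy_integrand k) 0 (2 * PI).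

Lemma cauchy_moment_correct k :
  is_RInt (V := C_R_NormedModule) (cauchy_integrand k) 0 (2 * PI) (cauchy_moment k).
Proof. exact: (RInt_correct (V := C_R_CompleteNormedModule)) (ex_RInt_cauchy_integrand k). Qed.

Lemma cauchy_integrand_rec k t :
  cauchy_integrand k t = (Ci * circle_pow r k t + theta * cauchy_integrand (k - 1) t)%C.
Proof.
have r_neq0 : r <> 0 by lra.
have split_k : circle_pow r k t = (circle_pow r (k - 1) t * circle_pow r 1 t)%C.
  by rewrite -circle_pow_add // Z.sub_add.
rewrite /cauchy_integrand split_k; field.
exact: circle_sub_neq0.
Qed.

Lemma cauchy_moment_rec k :
  cauchy_moment k =
  ((if (k =? 0)%Z then RtoC (2 * PI) * Ci else 0) + theta * cauchy_moment (k - 1))%C.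
Proof.
apply: (is_RInt_unique (V := C_R_CompleteNormedModule)).
have := is_RInt_plus _ _ _ _ _ _ (is_RInt_Ci_circle_pow r k (Rgt_not_eq _ _ r_gt0))
  (is_RInt_scal _ _ _ theta _ (cauchy_moment_correct (k - 1))).
rewrite scal_R_Cmult; apply: is_RInt_ext => t _.
by rewrite scal_R_Cmult (cauchy_integrand_rec k).
Qed.

Lemma Cmod_cauchy_integrand_le k t :
  Cmod (cauchy_integrand k t) <= powerRZ r k * r / (r - Rabs theta).
Proof.
rewrite /cauchy_integrand Cmod_div; last exact: circle_sub_neq0.
rewrite !Cmod_mult Cmod_Ci !Cmod_circle_pow //= Rmult_1_l Rmult_1_r.
apply: Rmult_le_compat_l; first by have := powerRZ_lt r k r_gt0; nra.
by apply: Rinv_le_contravar; [| apply: Cmod_circle_sub_ge]; lra.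
Qed.

Lemma Cmod_cauchy_moment_le k :
  Cmod (cauchy_moment k) <= 2 * PI * (powerRZ r k * r / (r - Rabs theta)).
Proof.
rewrite -norm_C_R -[2 * PI]Rminus_0_r.
apply: (norm_RInt_le_const (V := C_R_NormedModule)) (cauchy_moment_correct k).
- by have := PI_RGT_0; lra.
- by move=> t _; rewrite norm_C_R; apply: Cmod_cauchy_integrand_le.
Qed.

Lemma cauchy_moment_neg_iter k N : (k < 0)%Z ->
  cauchy_moment k = (RtoC (theta ^ N) * cauchy_moment (k - Z.of_nat N))%C.
Proof.
move=> k_lt0; elim: N => [|N IH]; first by rewrite Z.sub_0_r /=; ring.
rewrite IH (cauchy_moment_rec (k - Z.of_nat N)).
have -> : (k - Z.of_nat N =? 0)%Z = false by apply/Z.eqb_neq; lia.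
have -> : (k - Z.of_nat N - 1 = k - Z.of_nat (S N))%Z by lia.
by rewrite -tech_pow_Rmult RtoC_mult; ring.
Qed.

Lemma cauchy_moment_neg k : (k < 0)%Z -> cauchy_moment k = 0%C.
Proof.
move=> k_lt0; apply: Cmod_eq_0; apply: Rle_antisym; last exact: Cmod_ge_0.
have q_lt1 : Rabs (Rabs theta / r) < 1.
  rewrite Rabs_pos_eq; first exact/(Rdiv_lt_1 _ _ r_gt0).
  exact: Rdiv_le_0_compat (Rabs_pos theta) r_gt0.
apply: (le_0_of_le_geom _ (2 * PI * (powerRZ r k * r / (r - Rabs theta))) _ q_lt1) => N.
rewrite (cauchy_moment_neg_iter k N k_lt0) Cmod_mult Cmod_R -RPow_abs.
apply: Rle_trans (Rmult_le_compat_l _ _ _ (pow_le _ N (Rabs_pos _)) (Cmod_cauchy_moment_le _)) _.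
have r_neq0 : r <> 0 by lra.
have -> : powerRZ r (k - Z.of_nat N) = powerRZ r k / r ^ N.
  by rewrite /Z.sub powerRZ_add // powerRZ_neg' -pow_powerRZ.
rewrite /Rdiv Rpow_mult_distr pow_inv; apply: Req_le; field.
by split; [apply: pow_nonzero | lra].
Qed.

Lemma cauchy_moment_nat p : cauchy_moment (Z.of_nat p) = (RtoC (2 * PI * theta ^ p) * Ci)%C.
Proof.
elim: p => [|p IH].
  by rewrite cauchy_moment_rec cauchy_moment_neg //= Rmult_1_r Cmult_0_r Cplus_0_r.
rewrite cauchy_moment_rec.
have -> : (Z.of_nat (S p) =? 0)%Z = false by apply/Z.eqb_neq; lia.
have -> : (Z.of_nat (S p) - 1 = Z.of_nat p)%Z by lia.
by rewrite IH /= !RtoC_mult; ring.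
Qed.

Lemma cauchy_moment_sub j m :
  cauchy_moment (Z.of_nat j - Z.of_nat m) =
  if Nat.leb m j then (RtoC (2 * PI * theta ^ (j - m)) * Ci)%C else 0%C.
Proof.
case: Nat.leb_spec => [le_mj | lt_jm].
- by rewrite -Nat2Z.inj_sub // cauchy_moment_nat.
- by apply: cauchy_moment_neg; lia.
Qed.

End CauchyMoment.

Lemma RtoC_sum_n (a : nat -> R) N : RtoC (sum_n a N) = sum_n (fun k => RtoC (a k)) N.
Proof.
elim: N => [|N IH]; first by rewrite !sum_O.
by rewrite !sum_Sn -IH RtoC_plus.
Qed.

Lemma circle_integrand_rising_expand n m theta r t : Rabs theta < r ->
  ((cpoch (RtoC r * (cos t, sin t) + 1) n / cpow (RtoC r * (cos t, sin t)) m
     / (RtoC r * (cos t, sin t) - theta)) * (Ci * RtoC r * (cos t, sin t)))%C =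
  sum_n (fun j => scal (rising_coef (S n) (S j))
                       (cauchy_integrand r theta (Z.of_nat j - Z.of_nat m) t)) n.
Proof.
move=> theta_in; have r_gt0 : 0 < r by have := Rabs_pos theta; lra.
have r_neq0 : r <> 0 by lra.
rewrite -Cmult_assoc -circle_pow_1.
rewrite cpoch_shift_expand; last exact: circle_pow_neq0.
rewrite /Cdiv -!Csum_n_mult_r; apply: Csum_n_ext => j _.
rewrite scal_R_Cmult /cauchy_integrand !cpow_circle_pow //.
rewrite -{1}(Z.sub_add (Z.of_nat m) (Z.of_nat j)) circle_pow_add //.
by field; split; [exact: circle_sub_neq0 | exact: circle_pow_neq0].
Qed.

Lemma circle_integral_rising n m theta r : Rabs theta < r ->
  circle_integral (fun z => cpoch (z + 1) n / cpow z m / (z - theta))%C r =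
  (RtoC (2 * PI) * Ci * RtoC (rising_tail_sum n m theta))%C.
Proof.
move=> theta_in; apply: (is_RInt_unique (V := C_R_CompleteNormedModule)).
apply: is_RInt_ext => [t _|]; first by rewrite circle_integrand_rising_expand.
have -> : (RtoC (2 * PI) * Ci * RtoC (rising_tail_sum n m theta))%C =
  sum_n (fun j => scal (rising_coef (S n) (S j))
                       (cauchy_moment r theta (Z.of_nat j - Z.of_nat m))) n.
  rewrite /rising_tail_sum -sum_n_Reals RtoC_sum_n -Csum_n_mult_l.
  apply: Csum_n_ext => j _.
  by rewrite scal_R_Cmult cauchy_moment_sub //; case: Nat.leb; rewrite !RtoC_mult; ring.
apply: is_RInt_sum_n => j _.
apply: is_RInt_scal; exact: cauchy_moment_correct.
Qed.

Theorem theorem1 (n m : nat) (theta r : R) :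
  (1 <= n)%nat -> (m <= n)%nat -> (0 < theta)%R -> (theta < r)%R ->
  RtoC (S' (n + 1) (m + 1) theta) =
  (RtoC (theta ^ m / poch (theta + 1) n) * / (RtoC (2 * PI) * Ci) *
   circle_integral
     (fun z => cpoch (z + RtoC 1) n / cpow z m / (z - RtoC theta)) r)%C.
Proof.
(* The identity holds for all n and m. *)
move=> _ _ theta_gt0 theta_lt_r.
rewrite S'_succ_succ // circle_integral_rising; last by rewrite Rabs_pos_eq; lra.
rewrite [in LHS]RtoC_mult; field; split.
- by move=> /(f_equal snd) /=; lra.
- by move=> /(f_equal fst) /=; have := PI_RGT_0; lra.
Qed.
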